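(* Let $G$ be a connected graph with a pair $\{v_i,v_j\}$ of order $h$ and associated vector $S=(s_1,\dots,s_n)^t$. Let $G'$ be a subgraph of $G$ all of whose vertices have the same weight, and let $\tilde G$ be the graph obtained from $G$ by removing all edges of $G'$. If $\tilde G$ is not connected, then $v_i$ and $v_j$ belong to the same connected component of $\tilde G$.
   Context: Graphs are finite, may have multiple edges, no loops. For $G$ with vertices $v_1,\dots,v_n$ let $c_{ij}$ ($i\neq j$) be the number of edges joining $v_i,v_j$, $c_{ii}=-\sum_{j\ne i}c_{ij}$, $M(G)=(c_{ij})$. For an integer $h>0$, a pair $\{v_i,v_j\}$ has order $h$ if there is $S=(s_1,\dots,s_n)^t\in\mathbb{Z}^n$ with $M(G)S=h(e_i-e_j)$ and $\gcd(s_1-s_n,\dots,s_{n-1}-s_n)=1$; the weight of $v_k$ is $s_k$. *)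

From HB Require Import structures.
From mathcomp Require Import all_boot all_order all_algebra.
Set Implicit Arguments. Unset Strict Implicit. Unset Printing Implicit Defensive.
Import Order.TTheory GRing.Theory Num.Theory.
Local Open Scope ring_scope.

(* A finite multigraph without loops on the vertex set 'I_m, given by its
   edge-multiplicity function c (c u v = number of edges joining u and v). *)
Definition multigraph (m : nat) (c : 'I_m -> 'I_m -> nat) : Prop :=
  (forall u v, c u v = c v u) /\ (forall u, c u u = 0%N).

Definition adj (m : nat) (c : 'I_m -> 'I_m -> nat) : rel 'I_m :=
  fun u v => (0 < c u v)%N.

Definition connected_mg (m : nat) (c : 'I_m -> 'I_m -> nat) : Prop :=
  forall u v : 'I_m, connect (adj c) u v.

Definition Mmat (m : nat) (c : 'I_m -> 'I_m -> nat) : 'M[int]_m :=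
  \matrix_(k, l) (if k == l then - (\sum_(l' | l' != k) (c k l')%:Z)
                  else (c k l)%:Z).

Definition evec (m : nat) (i : 'I_m) : 'cV[int]_m := delta_mx i 0.

(* The pair {v_i, v_j} has order h with associated vector S (vertices are
   'I_(n.+1), the last vertex v_n being ord_max):
   M(G) S = h (e_i - e_j) and gcd(s_1 - s_n, ..., s_{n-1} - s_n) = 1. *)
Definition pair_of_order (n : nat) (c : 'I_n.+1 -> 'I_n.+1 -> nat)
    (i j : 'I_n.+1) (h : nat) (S : 'cV[int]_n.+1) : Prop :=
  (0 < h)%N /\
  Mmat c *m S = h%:Z *: (evec i - evec j) /\
  \big[gcdz/0]_(k : 'I_n.+1 | k != ord_max) (S k 0 - S ord_max 0) = 1.

From HB Require Import structures.
From mathcomp Require Import all_boot all_order all_algebra.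
Import Order.TTheory GRing.Theory Num.Theory.
Set Implicit Arguments. Unset Strict Implicit. Unset Printing Implicit Defensive.
Local Open Scope ring_scope.

(* Sum the rows of M(G) S = h (e_i - e_j) over the vertex set C of the
   component of v_i in G~.  Row k of M(G) S is the net flow
   sum_l c_kl (s_l - s_k) out of v_k; flows between two vertices of C cancel
   by antisymmetry, and every edge of G leaving C is an edge of G', across
   which the weight is constant, so the sum is 0.  If v_j were not in C the
   right-hand side would sum to h > 0. *)

Lemma sum_antisym_eq0 (R : numDomainType) (I : finType) (A : pred I)
    (f : I -> I -> R) :
  (forall k l, f k l = - f l k) -> \sum_(k in A) \sum_(l in A) f k l = 0.
Proof.
move=> f_antisym; set T := (X in X = 0).
have T_opp : T = - T.
  rewrite {1}/T exchange_big /= -sumrN; apply: eq_bigr => k _.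
  by rewrite -sumrN; apply: eq_bigr => l _; rewrite f_antisym.
by apply/eqP; move/eqP: T_opp; rewrite -subr_eq0 opprK -mulr2n mulrn_eq0.
Qed.

Section WeightFlow.

Variables (m : nat) (c : 'I_m -> 'I_m -> nat) (S : 'cV[int]_m).

Lemma Mmat_mulmx_row k :
  (Mmat c *m S) k 0 = \sum_l (c k l)%:Z * (S l 0 - S k 0).
Proof.
rewrite mxE (bigD1 k) //= [RHS](bigD1 k) //= subrr mulr0 add0r.
rewrite !mxE eqxx mulNr mulr_suml -sumrN -big_split /=.
by apply: eq_bigr => l lk; rewrite !mxE eq_sym (negbTE lk) mulrBr addrC.
Qed.

Hypothesis c_sym : forall u v, c u v = c v u.

Lemma sum_Mmat_mulmx_cut (C : {set 'I_m}) :
  (forall k l, k \in C -> l \notin C -> (0 < c k l)%N -> S k 0 = S l 0) ->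
  \sum_(k in C) (Mmat c *m S) k 0 = 0.
Proof.
move=> cut_flat; pose f k l := (c k l)%:Z * (S l 0 - S k 0).
have f_cut k l : k \in C -> l \notin C -> f k l = 0.
  move=> kC lC; rewrite /f; case: (posnP (c k l)) => [-> | c_pos].
    by rewrite mul0r.
  by rewrite (cut_flat k l kC lC c_pos) subrr mulr0.
rewrite -[RHS](@sum_antisym_eq0 _ _ [in C] f); last first.
  by move=> k l; rewrite /f c_sym -mulrN opprB.
apply: eq_bigr => k kC; rewrite Mmat_mulmx_row.
rewrite (bigID (mem C)) /= [X in _ + X]big1 ?addr0 //.
by move=> l lC; apply: f_cut.
Qed.

End WeightFlow.

Lemma sum_evecB (m : nat) (C : {set 'I_m}) (i j : 'I_m) :
  i \in C -> j \notin C -> \sum_(k in C) (evec i - evec j) k 0 = 1.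
Proof.
move=> iC jC; have ij : i != j by apply: contraNneq jC => <-.
rewrite (bigD1 i) //= big1 => [|k /andP [kC ki]].
  by rewrite !mxE eqxx (negbTE ij) subr0 addr0.
have kj : k != j by apply: contraNneq jC => <-.
by rewrite !mxE (negbTE ki) (negbTE kj) subrr.
Qed.

Lemma connect_cut (T : finType) (e : rel T) (x u v : T) :
  connect e x u -> ~~ connect e x v -> ~~ e u v.
Proof.
move=> xu; apply: contra => euv.
exact: connect_trans xu (connect1 euv).
Qed.

Theorem lemma1p10 (n : nat) (c : 'I_n.+1 -> 'I_n.+1 -> nat)
    (i j : 'I_n.+1) (h : nat) (S : 'cV[int]_n.+1)
    (c' : 'I_n.+1 -> 'I_n.+1 -> nat) (V' : {set 'I_n.+1}) :
  multigraph c ->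
  connected_mg c ->
  i != j ->
  pair_of_order c i j h S ->
  (* G' = (V', c') is a subgraph of G *)
  multigraph c' ->
  (forall u v, (c' u v <= c u v)%N) ->
  (forall u v, (0 < c' u v)%N -> u \in V' /\ v \in V') ->
  (* all vertices of G' have the same weight *)
  (forall u v, u \in V' -> v \in V' -> S u 0 = S v 0) ->
  (* G~ = G minus the edges of G' is not connected *)
  ~ connected_mg (fun u v => (c u v - c' u v)%N) ->
  connect (adj (fun u v => (c u v - c' u v)%N)) i j.
Proof.
move=> [c_sym _] _ _ [h_pos [MS_eq _]] _ c'_le c'_V' S_V' _.
apply/negPn/negP => not_ij.
pose C := [set k | connect (adj (fun u v => c u v - c' u v)%N) i k].
have iC : i \in C by rewrite inE connect0.
have jC : j \notin C by rewrite inE.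
have cut_flat k l : k \in C -> l \notin C -> (0 < c k l)%N -> S k 0 = S l 0.
  rewrite !inE => ik il c_pos.
  have := connect_cut ik il; rewrite /adj -leqNgt leqn0 subn_eq0 => c_le.
  have c'_pos : (0 < c' k l)%N by apply: leq_trans c_le.
  by have [kV lV] := c'_V' _ _ c'_pos; apply: S_V'.
have := sum_Mmat_mulmx_cut c_sym cut_flat.
rewrite MS_eq; under eq_bigr do rewrite mxE.
rewrite -mulr_sumr sum_evecB //.
by rewrite mulr1 => -[h0]; rewrite h0 in h_pos.
Qed.
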